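(* Let $A$ and $B$ be finite posets. Then: (1) $A^B=\emptyset$ if and only if $A=\emptyset$ and $B\neq\emptyset$. (2) $A^B$ is an antichain if and only if $A$ is an antichain or $B=\emptyset$; in that case $|A^B|=|A|^c$ if $A\neq\emptyset$ or $B\neq\emptyset$, where $c$ is the number of connected components of $B$, and $|A^B|=1$ if $A=B=\emptyset$. (3) Assume $A\neq\emptyset$ and let $f,g\in A^B$ with $f\le g$. Then $\mathrm{h}([f,g])=\mathrm{h}(A^B)$ (the height of the interval $[f,g]$ of $A^B$ equals the height of $A^B$) if and only if $f,g\in\mathcal D(A^B)$ and $\mathrm{h}([f(b),g(b)])=\mathrm{h}(A)$ for all $b\in B$, where $[f(b),g(b)]$ is an interval of $A$. (4) If $A\neq\emptyset$, then $\mathrm{h}(A^B)=\mathrm{h}(A)\,|B|$.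
   Context: For posets $P$ and $Q$, $P^Q$ denotes the set of order-preserving maps $Q\to P$, ordered pointwise: $f\le g$ iff $f(q)\le g(q)$ in $P$ for all $q\in Q$; in particular $P^\emptyset$ consists of the single empty map. $\mathcal D(P^Q)$ is the set of $g\in P^Q$ that are constant on each connected component of $Q$. For a finite non-empty poset $P$, its height $\mathrm{h}(P)$ is the largest value of $|K|-1$ over chains $K\subseteq P$. For $x\le y$ in a poset, $[x,y]=\{z: x\le z\le y\}$ is an interval, regarded as a poset. *)

From mathcomp Require Import all_boot all_order.
Set Implicit Arguments. Unset Strict Implicit. Unset Printing Implicit Defensive.
Import Order.Theory.
Local Open Scope order_scope.

Section Defs.
Variable T : finType.
Variable le : rel T.

Definition is_chain (S K : {set T}) : bool :=
  (K \subset S) && [forall x in K, forall y in K, le x y || le y x].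

(* height of the finite subposet S: max (|K| - 1) over chains K of S
   (equals 0 when S is empty; the paper only uses it for nonempty S) *)
Definition height (S : {set T}) : nat :=
  \max_(K : {set T} | is_chain S K) #|K|.-1.

Definition is_antichain (S : {set T}) : Prop :=
  forall x y, x \in S -> y \in S -> le x y -> x = y.
End Defs.

Section Posets.
Context {dA dB : Order.disp_t} (A : finPOrderType dA) (B : finPOrderType dB).

(* comparability relation on B; its connect-closure gives the components *)
Definition cmpB : rel B := fun x y => (x <= y) || (y <= x).

Definition ncompB : nat := n_comp cmpB B.

Definition homset : {set {ffun B -> A}} :=
  [set f : {ffun B -> A} | [forall x : B, forall y : B, (x <= y) ==> (f x <= f y)]].

Definition ffle : rel {ffun B -> A} := fun f g => [forall b : B, f b <= g b].

Definition Dset : {set {ffun B -> A}} :=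
  [set g in homset | [forall b : B, forall b' : B, connect cmpB b b' ==> (g b == g b')]].

Definition hom_interval (f g : {ffun B -> A}) : {set {ffun B -> A}} :=
  [set h in homset | ffle f h && ffle h g].

Definition A_interval (x y : A) : {set A} := [set z : A | (x <= z) && (z <= y)].
End Posets.

(* The height of A^B is additive over B: writing hA for the height of A,
   the height of an interval [f, g] of A^B is the sum over b of the heights
   of the intervals [f b, g b] of A.  It is at most that sum because
   k |-> sum_b rank (k b) is strictly monotone; it is at least that sum by
   raising f, one point at a time, along a longest chain of [f b, g b],
   always at a maximal point b where f and g still differ.  Taking constant
   maps at the ends of a longest chain of A gives h(A^B) = hA * |B|; an
   interval reaches this height only when every [f b, g b] has height hA,
   which forces f and g to be constant along comparable pairs, i.e. on
   components.  If A is an antichain, order preserving maps are exactly the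
   maps constant on components, which are counted by their values on
   component representatives. *)

From mathcomp Require Import all_boot all_order.
Import Order.Theory.
Set Implicit Arguments. Unset Strict Implicit. Unset Printing Implicit Defensive.

Lemma eqn_sum_bound (I : finType) (F : I -> nat) n : (forall i, F i <= n) ->
  (\sum_i F i == #|I| * n) = [forall i, F i == n].
Proof.
by move=> le_n; rewrite -sum_nat_const (leqif_sum (fun i _ => leqif_eq (le_n i))).2.
Qed.

Definition partial_order (T : Type) (le : rel T) :=
  [/\ reflexive le, antisymmetric le & transitive le].

Section Height.
Variables (T : finType) (le : rel T).

Lemma is_chainP (S K : {set T}) :
  reflect (K \subset S /\ {in K &, forall x y, le x y || le y x}) (is_chain le S K).
Proof.
apply: (iffP andP) => -[sKS cmpK]; split=> //.
  by move=> x y xK yK; move/forall_inP/(_ x xK)/forall_inP: cmpK; apply.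
by apply/forall_inP=> x xK; apply/forall_inP=> y yK; apply: cmpK.
Qed.

Lemma leq_chain_height (S K : {set T}) : is_chain le S K -> #|K|.-1 <= height le S.
Proof. exact: leq_bigmax_cond. Qed.

Lemma height_leP (S : {set T}) n :
  reflect (forall K, is_chain le S K -> #|K|.-1 <= n) (height le S <= n).
Proof. exact: bigmax_leqP. Qed.

Lemma height_subset (S S' : {set T}) : S \subset S' -> height le S <= height le S'.
Proof.
move=> sSS'; apply/height_leP=> K /is_chainP[sKS cmpK]; apply: leq_chain_height.
by apply/is_chainP; split=> //; apply: subset_trans sSS'.
Qed.

(* phi is injective on every chain of S and maps it into [0, n]. *)
Lemma height_le_strict_mono (S : {set T}) (phi : T -> nat) n :
  {in S &, forall x y, le x y -> x != y -> phi x < phi y} ->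
  {in S, forall x, phi x <= n} -> height le S <= n.
Proof.
move=> phi_mono phi_le; apply/height_leP=> K /is_chainP[sKS cmpK].
have phi_inj : {in K &, injective phi}.
  move=> x y xK yK; apply: contra_eq => nxy.
  have [xS yS] := (subsetP sKS x xK, subsetP sKS y yK).
  rewrite neq_ltn; case/orP: (cmpK x y xK yK) => /phi_mono; first by move=> ->.
  by rewrite eq_sym orbC => ->.
have uK : uniq [seq phi x | x <- enum K].
  by rewrite map_inj_in_uniq ?enum_uniq // => x y; rewrite !mem_enum; apply: phi_inj.
suff : #|K| <= n.+1 by case: #|K|.
rewrite cardE -(size_map phi) -(size_iota 0 n.+1); apply: uniq_leq_size uK _.
move=> _ /mapP[x + ->]; rewrite mem_enum => xK.
by rewrite mem_iota ltnS phi_le // (subsetP sKS).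
Qed.

Hypothesis le_po : partial_order le.
Let refl_le : reflexive le. Proof. by case: le_po. Qed.
Let anti_le : antisymmetric le. Proof. by case: le_po. Qed.
Let trans_le : transitive le. Proof. by case: le_po. Qed.

Lemma exists_height_chain (S : {set T}) x : x \in S ->
  exists K, [/\ is_chain le S K, 0 < #|K| & #|K|.-1 = height le S].
Proof.
move=> xS.
have chain1 : is_chain le S [set x].
  apply/is_chainP; split=> [|y z /set1P-> /set1P->]; by rewrite ?sub1set ?refl_le.
have [K chK hK] : {K | is_chain le S K & height le S = #|K|.-1}.
  by apply: eq_bigmax_cond; apply/card_gt0P; exists [set x].
case: (posnP #|K|) => [K0|]; last by exists K.
by exists [set x]; rewrite cards1 hK K0.
Qed.

Lemma height_lt_insert (S S' : {set T}) z : S \subset S' -> z \in S' -> z \notin S ->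
  {in S, forall k, le k z || le z k} -> S != set0 -> height le S < height le S'.
Proof.
move=> sSS' zS' zNS cmpz /set0Pn[x xS].
have [K [chK K0 hK]] := exists_height_chain xS.
have /is_chainP[sKS cmpK] := chK.
have zNK : z \notin K by apply: contra zNS => /(subsetP sKS).
have chzK : is_chain le S' (z |: K).
  apply/is_chainP; split; first by rewrite subUset sub1set zS' (subset_trans sKS).
  move=> u v /setU1P[->|uK] /setU1P[->|vK]; rewrite ?refl_le //.
  - by rewrite orbC cmpz ?(subsetP sKS).
  - by rewrite cmpz ?(subsetP sKS).
  - exact: cmpK.
by have := leq_chain_height chzK; rewrite cardsU1 zNK -hK; case: #|K| K0.
Qed.

Definition rank (S : {set T}) x := height le [set y in S | le y x].

Lemma rank_le_height (S : {set T}) x : rank S x <= height le S.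
Proof. by apply: height_subset; apply/subsetP=> y /setIdP[]. Qed.

Lemma rank_mono (S : {set T}) x y : le x y -> rank S x <= rank S y.
Proof.
move=> lexy; apply: height_subset; apply/subsetP=> z /setIdP[zS lezx].
by rewrite inE zS (trans_le lezx).
Qed.

Lemma rank_lt (S : {set T}) x y : x \in S -> y \in S -> le x y -> x != y ->
  rank S x < rank S y.
Proof.
move=> xS yS lexy nxy; apply: (@height_lt_insert _ _ y).
- by apply/subsetP=> z /setIdP[zS lezx]; rewrite inE zS (trans_le lezx).
- by rewrite inE yS refl_le.
- by rewrite inE yS; apply: contra nxy => leyx; rewrite eq_sym; apply/eqP/anti_le/andP.
- by move=> z /setIdP[_ lezx]; rewrite (trans_le lezx).
- by apply/set0Pn; exists x; rewrite inE xS refl_le.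
Qed.

Lemma exists_maximal (P : pred T) x : P x ->
  exists2 m, P m & forall y, P y -> le m y -> y = m.
Proof.
move=> Px; case: (arg_maxnP (rank setT) Px) => m Pm maxm; exists m => // y Py lemy.
apply/eqP; apply: contraT => nym.
by have := maxm y Py; rewrite /= leqNgt rank_lt ?inE 1?eq_sym.
Qed.

Lemma exists_minimal (P : pred T) x : P x ->
  exists2 m, P m & forall y, P y -> le y m -> y = m.
Proof.
move=> Px; case: (arg_minnP (rank setT) Px) => m Pm minm; exists m => // y Py leym.
apply/eqP; apply: contraT => nym.
by have := minm y Py; rewrite /= leqNgt rank_lt ?inE.
Qed.

Lemma chain_min (S K : {set T}) x : is_chain le S K -> x \in K ->
  exists2 m, m \in K & {in K, forall k, le m k}.
Proof.
move=> /is_chainP[_ cmpK] xK; have [m mK minm] := exists_minimal (P := mem K) xK.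
exists m => // k kK; case/orP: (cmpK m k mK kK) => // lekm.
by rewrite (minm k kK lekm) refl_le.
Qed.

Lemma chain_max (S K : {set T}) x : is_chain le S K -> x \in K ->
  exists2 m, m \in K & {in K, forall k, le k m}.
Proof.
move=> /is_chainP[_ cmpK] xK; have [m mK maxm] := exists_maximal (P := mem K) xK.
exists m => // k kK; case/orP: (cmpK m k mK kK) => // lemk.
by rewrite (maxm k kK lemk) refl_le.
Qed.

Definition interval (S : {set T}) x y := [set z in S | le x z && le z y].

Lemma height_interval_refl (S : {set T}) x : height le (interval S x x) = 0.
Proof.
apply/eqP; rewrite -leqn0; apply/height_leP=> K /is_chainP[sKS _].
have : K \subset [set x].
  apply/subsetP=> y /(subsetP sKS)/setIdP[_ /andP[lexy leyx]].
  by rewrite inE; apply/eqP/anti_le; rewrite leyx lexy.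
by move/subset_leq_card; rewrite cards1; case: #|K| => [|[]].
Qed.

Lemma height_interval_ltr (S : {set T}) x y z :
    x \in S -> z \in S -> le x y -> le y z -> y != z ->
  height le (interval S x y) < height le (interval S x z).
Proof.
move=> xS zS lexy leyz nyz; apply: (@height_lt_insert _ _ z).
- apply/subsetP=> w /setIdP[wS /andP[lexw lewy]].
  by rewrite inE wS lexw (trans_le lewy).
- by rewrite inE zS (trans_le lexy) ?refl_le.
- rewrite inE zS /=; apply: contra nyz => /andP[_ lezy].
  by apply/eqP/anti_le; rewrite leyz lezy.
- by move=> w /setIdP[_ /andP[_ lewy]]; rewrite (trans_le lewy).
- by apply/set0Pn; exists x; rewrite inE xS refl_le lexy.
Qed.

Lemma height_interval_ltl (S : {set T}) x y z :
    x \in S -> y \in S -> le x y -> x != y -> le y z ->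
  height le (interval S y z) < height le (interval S x z).
Proof.
move=> xS yS lexy nxy leyz; apply: (@height_lt_insert _ _ x).
- apply/subsetP=> w /setIdP[wS /andP[leyw lewz]].
  by rewrite inE wS lewz (trans_le lexy).
- by rewrite inE xS refl_le (trans_le lexy).
- rewrite inE xS /=; apply: contra nxy => /andP[leyx _].
  by apply/eqP/anti_le; rewrite lexy leyx.
- by move=> w /setIdP[_ /andP[leyw _]]; rewrite (trans_le lexy leyw) orbT.
- by apply/set0Pn; exists y; rewrite inE yS refl_le leyz.
Qed.

(* Removing the bottom x of a longest chain of [x, z] leaves a chain of [m, z],
   where m is its next element. *)
Lemma interval_step (S : {set T}) x z : x \in S -> z \in S -> le x z -> x != z ->
  exists2 a, [/\ a \in S, le x a, x != a & le a z] &
    height le (interval S x z) <= (height le (interval S a z)).+1.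
Proof.
move=> xS zS lexz nxz.
have xI : x \in interval S x z by rewrite inE xS refl_le lexz.
have [K [chK _ hK]] := exists_height_chain xI; have /is_chainP[sKI cmpK] := chK.
case: (set_0Vmem (K :\ x)) => [Kx0 | [m0 m0K]].
  exists z; first by split; rewrite ?refl_le.
  have : #|K| <= 1 by rewrite -(cards1 x) subset_leq_card // -setD_eq0 Kx0.
  by rewrite -hK; case: #|K| => [|[]].
have chKx : is_chain le (interval S x z) (K :\ x).
  apply/is_chainP; split=> [|u v /setD1P[_ uK] /setD1P[_ vK]]; last exact: cmpK.
  exact: subset_trans (subsetDl _ _) sKI.
have [m /setD1P[nmx mK] minm] := chain_min chKx m0K.
have /setIdP[mS /andP[lexm lemz]] := subsetP sKI m mK.
exists m; first by split; rewrite // eq_sym.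
have chKm : is_chain le (interval S m z) (K :\ x).
  apply/is_chainP; split; last by move: chKx => /is_chainP[].
  apply/subsetP=> k kKx; have /setD1P[_ /(subsetP sKI)/setIdP[kS /andP[_ lekz]]] := kKx.
  by rewrite inE kS minm.
have Kx_gt0 : 0 < #|K :\ x| by apply/card_gt0P; exists m0.
rewrite -hK (cardsD1 x K); apply: (@leq_trans #|K :\ x|).
  by case: (x \in K) => //; apply: leq_pred.
by rewrite -(ltn_predK Kx_gt0) ltnS leq_chain_height.
Qed.

End Height.

Section ComponentConstantMaps.
Variables (T X : finType) (e : rel T).
Hypothesis e_sym : connect_sym e.

Definition component_constant :=
  [set h : {ffun T -> X} | [forall x, forall y, connect e x y ==> (h x == h y)]].

(* Such a map is determined by its values on the roots of the components. *)
Lemma card_component_constant : #|component_constant| = #|X| ^ n_comp e T.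
Proof.
pose R := {x : T | roots e x}.
pose ext (phi : {ffun R -> X}) := [ffun x => phi (exist _ (root e x) (roots_root e_sym x))].
have ext_inj : injective ext.
  move=> phi psi /ffunP eq_ext; apply/ffunP=> -[x rx]; have := eq_ext x; rewrite !ffunE.
  suff -> : exist _ (root e x) (roots_root e_sym x) = exist _ x rx :> R by [].
  exact/val_inj/eqP.
have -> : component_constant = [set ext phi | phi in {ffun R -> X}].
  apply/setP=> h; rewrite inE; apply/idP/imsetP=> [/forallP hconst | [phi _ ->]].
    exists [ffun u => h (val u)] => //; apply/ffunP=> x; rewrite !ffunE /=.
    by apply/eqP/(implyP (forallP (hconst x) _)); apply: connect_root.
  apply/forallP=> x; apply/forallP=> y; apply/implyP=> /(rootP e_sym) exy.
  by rewrite !ffunE; apply/eqP; congr (phi _); apply: val_inj.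
rewrite card_imset // card_ffun card_sig; congr (_ ^ _).
by apply: eq_card=> x; rewrite !inE andbT.
Qed.

End ComponentConstantMaps.

Local Open Scope order_scope.

Lemma le_po (d : Order.disp_t) (T : porderType d) : partial_order (<=%O : rel T).
Proof. by split; [exact: lexx | exact: le_anti | exact: le_trans]. Qed.

Section FunctionPoset.
Context {dA dB : Order.disp_t} (A : finPOrderType dA) (B : finPOrderType dB).

Notation hA := (height (<=%O : rel A)).
Notation hAB := (height (@ffle _ _ A B)).

Lemma fflP (f g : {ffun B -> A}) : reflect (forall b, f b <= g b) (ffle f g).
Proof. exact: forallP. Qed.

Lemma ffle_po : partial_order (@ffle _ _ A B).
Proof.
split=> [f | f g /andP[/fflP lefg /fflP legf] | g f h /fflP lefg /fflP legh].
- exact/fflP.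
- by apply/ffunP=> b; apply/le_anti; rewrite lefg legf.
- by apply/fflP=> b; apply: le_trans (lefg b) (legh b).
Qed.

Lemma homP (f : {ffun B -> A}) :
  reflect {homo f : x y / x <= y} (f \in homset A B).
Proof.
rewrite inE; apply: (iffP forallP) => [homf x y | homf x].
  by move/forallP/(_ y)/implyP: (homf x).
by apply/forallP=> y; apply/implyP/homf.
Qed.

Lemma const_hom (a : A) : [ffun=> a] \in homset A B.
Proof. by apply/homP=> x y _; rewrite !ffunE. Qed.

Lemma A_intervalE (x y : A) : A_interval x y = interval <=%O [set: A] x y.
Proof. by apply/setP=> z; rewrite !inE. Qed.

Lemma height_A_interval_le (x y : A) : (hA (A_interval x y) <= hA [set: A])%N.
Proof. exact/height_subset/subsetT. Qed.

Lemma height_le_sum (I : B -> {set A}) (S : {set {ffun B -> A}}) :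
  {in S, forall (k : {ffun B -> A}) b, k b \in I b} ->
  (hAB S <= \sum_b hA (I b))%N.
Proof.
move=> SI; pose phi (k : {ffun B -> A}) := (\sum_b rank <=%O (I b) (k b))%N.
apply: (height_le_strict_mono (phi := phi)) => [k k' kS k'S /fflP lekk' nkk' | k kS].
  have [b nb] : exists b, k b != k' b.
    apply/existsP; apply: contraR nkk' => /existsPn eqk.
    by apply/eqP/ffunP=> b; apply/eqP/negPn/eqk.
  have [lephi eqphi] := leqif_sum (P := predT)
    (fun b _ => leqif_eq (rank_mono (le_po A) (I b) (lekk' b))).
  rewrite /phi ltn_neqAle lephi eqphi andbT; apply/forallPn; exists b.
  by rewrite /= neq_ltn (rank_lt (le_po A) (SI k kS b) (SI k' k'S b)).
by apply: leq_sum => b _; apply: rank_le_height.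
Qed.

(* Raise f at a maximal point b where it differs from g: above b, f already
   agrees with g, so the raised map stays order preserving. *)
Lemma hom_interval_step (f g : {ffun B -> A}) :
    f \in homset A B -> g \in homset A B -> ffle f g -> f != g ->
  exists2 f', [/\ f' \in homset A B, ffle f f', f != f' & ffle f' g] &
    (\sum_b hA (A_interval (f b) (g b))
       <= (\sum_b hA (A_interval (f' b) (g b))).+1)%N.
Proof.
move=> /homP homf /homP homg /fflP lefg nfg.
have [b0 nb0] : exists b, f b != g b.
  apply/existsP; apply: contraR nfg => /existsPn eqfg.
  by apply/eqP/ffunP=> b; apply/eqP/negPn/eqfg.
have [b nb maxb] := exists_maximal (le_po B) (P := fun b => f b != g b) nb0.
have [a [_ lefa nfa leag] step] :=
  interval_step (le_po A) (in_setT (f b)) (in_setT (g b)) (lefg b) nb.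
pose f' := [ffun u => if u == b then a else f u].
have f'b : f' b = a by rewrite ffunE eqxx.
have f'u u : u != b -> f' u = f u by rewrite ffunE => /negbTE->.
exists f'; first split.
- apply/homP=> u v leuv; rewrite !ffunE.
  case: (eqVneq u b) => [eub | nub]; case: (eqVneq v b) => [evb | nvb] //.
  + have eqfg : f v = g v.
      apply/eqP; apply: contraT => nfgv.
      by move: nvb; rewrite (maxb v nfgv) ?eqxx // -eub.
    by rewrite eqfg (le_trans leag) // homg // -eub.
  + by rewrite (le_trans _ lefa) // homf // -evb.
  + exact: homf.
- by apply/fflP=> u; case: (eqVneq u b) => [->|/f'u->]; rewrite ?f'b.
- by apply/eqP=> /ffunP/(_ b); rewrite f'b => efa; rewrite efa eqxx in nfa.
- by apply/fflP=> u; case: (eqVneq u b) => [->|/f'u->]; rewrite ?f'b.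
rewrite (bigD1 b) //= [X in (_ <= X.+1)%N](bigD1 b) //= f'b.
under [X in (_ <= (_ + X).+1)%N]eq_bigr => u /f'u-> do [].
by rewrite -addSn leq_add2r !A_intervalE.
Qed.

(* Induction on the height of [f, g]: each step of hom_interval_step lowers
   the sum by at most one and the height of the interval by at least one. *)
Lemma sum_height_le_hom_interval (f g : {ffun B -> A}) :
    f \in homset A B -> g \in homset A B -> ffle f g ->
  (\sum_b hA (A_interval (f b) (g b)) <= hAB (hom_interval f g))%N.
Proof.
move=> + gH; have [n] := ubnP (hAB (hom_interval f g)).
elim: n f => // n IH f; rewrite ltnS => le_n fH fg.
case: (eqVneq f g) => [<- | nfg].
  by rewrite big1 // => b _; rewrite A_intervalE (height_interval_refl (le_po A)).
have [f' [f'H leff' nff' lef'g] le_sum] := hom_interval_step fH gH fg nfg.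
have lt_h : (hAB (hom_interval f' g) < hAB (hom_interval f g))%N.
  exact (height_interval_ltl ffle_po fH f'H leff' nff' lef'g).
have le_IH := IH f' (leq_trans lt_h le_n) f'H lef'g.
by apply: leq_trans le_sum (leq_trans _ lt_h); rewrite ltnS.
Qed.

Lemma height_hom_interval (f g : {ffun B -> A}) :
    f \in homset A B -> g \in homset A B -> ffle f g ->
  hAB (hom_interval f g) = (\sum_b hA (A_interval (f b) (g b)))%N.
Proof.
move=> fH gH fg; apply/eqP; rewrite eqn_leq sum_height_le_hom_interval // andbT.
apply: height_le_sum => k /setIdP[_ /andP[/fflP lefk /fflP lekg]] b.
by rewrite inE lefk lekg.
Qed.

Lemma height_homset_le : (hAB (homset A B) <= hA [set: A] * #|B|)%N.
Proof.
rewrite mulnC -sum_nat_const; apply: (height_le_sum (I := fun=> [set: A])).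
by move=> k _ b; apply: in_setT.
Qed.

(* The extremities of a longest chain of A span an interval of full height. *)
Lemma exists_A_interval_full : #|A| <> 0%N ->
  exists x y : A, x <= y /\ hA (A_interval x y) = hA [set: A].
Proof.
move=> A0; have /card_gt0P[a _] : (0 < #|A|)%N by rewrite lt0n; apply/eqP.
have [K [chK /card_gt0P[k kK] hK]] := exists_height_chain (le_po A) (in_setT a).
have [x xK minx] := chain_min (le_po A) chK kK.
have [y yK maxy] := chain_max (le_po A) chK kK.
exists x, y; split; first exact: minx.
apply/eqP; rewrite eqn_leq height_A_interval_le -hK /=.
apply: leq_chain_height; apply/is_chainP; split; last by case/is_chainP: chK.
by apply/subsetP=> z zK; rewrite inE minx ?maxy.
Qed.

Lemma height_homset : #|A| <> 0%N -> hAB (homset A B) = (hA [set: A] * #|B|)%N.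
Proof.
move=> A0; apply/eqP; rewrite eqn_leq height_homset_le /=.
have [x [y [lexy hxy]]] := exists_A_interval_full A0.
pose cx : {ffun B -> A} := [ffun=> x]; pose cy : {ffun B -> A} := [ffun=> y].
have lecxy : ffle cx cy by apply/fflP=> b; rewrite !ffunE.
have sub : hom_interval cx cy \subset homset A B by apply/subsetP=> h /setIdP[].
apply: leq_trans (height_subset _ sub).
rewrite height_hom_interval ?const_hom // mulnC -sum_nat_const -hxy.
by apply: eq_leq; apply: eq_bigr => b _; rewrite !ffunE.
Qed.

Lemma cmpB_connect_eq (T : Type) (h : B -> T) :
  {homo h : x y / x <= y >-> x = y} -> forall u v, connect (@cmpB _ B) u v -> h u = h v.
Proof.
move=> homh u v /connectP[p + ->]; elim: p u => //= w p IHp u /andP[cmpuw pw].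
by rewrite -(IHp w pw); case/orP: cmpuw => [/homh | /homh ->].
Qed.

Lemma mem_Dset (h : {ffun B -> A}) : h \in homset A B ->
  {homo h : x y / x <= y >-> x = y} -> h \in Dset A B.
Proof.
move=> hH homh; rewrite inE hH; apply/forallP=> u; apply/forallP=> v.
by apply/implyP=> /(cmpB_connect_eq homh)->.
Qed.

Lemma height_hom_interval_full (f g : {ffun B -> A}) : #|A| <> 0%N ->
    f \in homset A B -> g \in homset A B -> ffle f g ->
  hAB (hom_interval f g) = hAB (homset A B) <->
  [/\ f \in Dset A B, g \in Dset A B &
      forall b, hA (A_interval (f b) (g b)) = hA [set: A]].
Proof.
move=> A0 fH gH fg; rewrite height_homset // height_hom_interval // mulnC.
have /homP homf := fH; have /homP homg := gH; have /fflP lefg := fg.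
split=> [/eqP | [_ _ full]]; last first.
  by rewrite (eq_bigr _ (fun b _ => full b)) sum_nat_const.
rewrite eqn_sum_bound => [/forallP full|b]; last exact: height_A_interval_le.
have {}full b : hA (A_interval (f b) (g b)) = hA [set: A] by apply/eqP/full.
split=> //; apply: mem_Dset => // u v leuv; apply/eqP; apply: contraT => neq.
- have := height_interval_ltl (le_po A) (in_setT (f u)) (in_setT (f v))
    (homf u v leuv) neq (lefg v).
  by rewrite -!A_intervalE full ltnNge height_A_interval_le.
- have := height_interval_ltr (le_po A) (in_setT (f u)) (in_setT (g v))
    (lefg u) (homg u v leuv) neq.
  by rewrite -!A_intervalE full ltnNge height_A_interval_le.
Qed.

Lemma cmpB_connect_sym : connect_sym (@cmpB _ B).
Proof. by apply: sym_connect_sym=> x y; rewrite /cmpB orbC. Qed.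

(* Maps constant on the components of B are automatically order preserving. *)
Lemma Dset_component_constant : Dset A B = component_constant A (@cmpB _ B).
Proof.
apply/setP=> h; rewrite [h \in Dset A B]inE [h \in component_constant _ _]inE.
rewrite andb_idl // => /forallP hconst; apply/homP=> u v leuv.
have /eqP-> : h u == h v.
  by apply: (implyP (forallP (hconst u) v)); apply: connect1; rewrite /cmpB leuv.
exact: lexx.
Qed.

Lemma homset_antichain : is_antichain <=%O [set: A] \/ #|B| = 0%N ->
  homset A B = Dset A B.
Proof.
move=> antiA; apply/setP=> h; apply/idP/idP=> [hH | /setIdP[]//].
have /homP homh := hH; apply: mem_Dset hH _ => u v leuv.
case: antiA => [antiA | B0]; last by case: (fintype0 u B0).
by apply: antiA; rewrite ?inE ?homh.
Qed.

Lemma card_homset_antichain : is_antichain <=%O [set: A] \/ #|B| = 0%N ->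
  #|homset A B| = (#|A| ^ ncompB B)%N.
Proof.
move=> antiA; rewrite homset_antichain // Dset_component_constant.
exact: card_component_constant cmpB_connect_sym.
Qed.

Lemma homset_eq0 : homset A B = set0 <-> (#|A| = 0 /\ #|B| <> 0)%N.
Proof.
split=> [homset0 | [A0 B0]].
  split.
    apply/eqP; apply: contraT; rewrite -lt0n => /card_gt0P[a _].
    by have := const_hom a; rewrite homset0 inE.
  move=> B0; have /card_gt0P[f _] : (0 < #|{ffun B -> A}|)%N by rewrite card_ffun B0.
  suff : f \in homset A B by rewrite homset0 inE.
  by apply/homP=> u; case: (fintype0 u B0).
have /card_gt0P[b _] : (0 < #|B|)%N by rewrite lt0n; apply/eqP.
by apply/setP=> f; case: (fintype0 (f b) A0).
Qed.

Lemma homset_antichainP : is_antichain (@ffle _ _ A B) (homset A B) <->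
  is_antichain <=%O [set: A] \/ #|B| = 0%N.
Proof.
split=> [antiAB | [antiA | B0] f g _ _ /fflP lefg]; last first.
- by apply/ffunP=> b; case: (fintype0 b B0).
- by apply/ffunP=> b; apply: antiA; rewrite ?inE.
have [B0 | /card_gt0P[b _]] := posnP #|B|; [by right | left=> x y _ _ lexy].
pose cx : {ffun B -> A} := [ffun=> x]; pose cy : {ffun B -> A} := [ffun=> y].
have lecxy : ffle cx cy by apply/fflP=> u; rewrite !ffunE.
by have /ffunP/(_ b) := antiAB _ _ (const_hom x) (const_hom y) lecxy; rewrite !ffunE.
Qed.

End FunctionPoset.

Theorem lemma9 (dA dB : Order.disp_t) (A : finPOrderType dA) (B : finPOrderType dB) :
  (* (1) *)
  (homset A B = set0 <-> (#|A| = 0 /\ #|B| <> 0))%N /\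
  (* (2) *)
  (is_antichain (@ffle _ _ A B) (homset A B) <->
     (is_antichain (<=%O : rel A) [set: A] \/ #|B| = 0%N)) /\
  (is_antichain (@ffle _ _ A B) (homset A B) ->
     ((#|A| <> 0 \/ #|B| <> 0) -> #|homset A B| = (#|A| ^ ncompB B)%N) /\
     ((#|A| = 0 /\ #|B| = 0) -> #|homset A B| = 1%N)) /\
  (* (3) *)
  (#|A| <> 0%N -> forall f g : {ffun B -> A},
     f \in homset A B -> g \in homset A B -> ffle f g ->
     (height (@ffle _ _ A B) (hom_interval f g) = height (@ffle _ _ A B) (homset A B) <->
      [/\ f \in Dset A B, g \in Dset A B &
          forall b : B, height (<=%O : rel A) (A_interval (f b) (g b))
                        = height (<=%O : rel A) [set: A]])) /\
  (* (4) *)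
  (#|A| <> 0%N -> height (@ffle _ _ A B) (homset A B) = (height (<=%O : rel A) [set: A] * #|B|)%N).
Proof.
split; first exact: homset_eq0.
split; first exact: homset_antichainP.
split.
  move=> /homset_antichainP/card_homset_antichain card_hom; split=> // -[_ B0].
  have : (ncompB B <= #|B|)%N := max_card _.
  by rewrite card_hom B0 leqn0 => /eqP->.
split; first by move=> A0 f g; apply: height_hom_interval_full.
exact: height_homset.
Qed.
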